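(* Let $G$ be a directed graph, let $a, b, k \geq 1$ be integers, and let $D$ be a well-linked set in $G$ of size $2(ab(2k-2)+1)$. If $G$ does not contain a family of $k$ directed cycles such that every vertex of $G$ is in at most two of the cycles, then there exist paths $P_1,\ldots,P_a$ in $G$ and sets $A_i, B_i \subseteq V(P_i)$ for $1 \leq i \leq a$ such that: (1) the paths $P_1,\ldots,P_a$ are pairwise vertex-disjoint; (2) the sets $A_1,B_1,\ldots,A_a,B_a$ each have size $b$ and are pairwise disjoint; (3) for every $1 \leq i \leq a$, all vertices of $A_i$ appear on $P_i$ before all vertices of $B_i$; (4) $\bigcup_{i=1}^a (A_i \cup B_i)$ is well-linked in $G$.
   Context: For $A,B\subseteq V(G)$ with $|A|=|B|$, a linkage from $A$ to $B$ is a set of $|A|$ pairwise vertex-disjoint directed paths each starting in $A$ and ending in $B$. A set $W\subseteq V(G)$ is well-linked if for all $A,B\subseteq W$ with $|A|=|B|$ there is a linkage from $A$ to $B$ in $G-(W\setminus(A\cup B))$. *)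

From mathcomp Require Import all_boot.
Set Implicit Arguments. Unset Strict Implicit. Unset Printing Implicit Defensive.

(* A directed graph is a relation e on a finite vertex type T:
   there is an arc x -> y iff e x y. *)

Definition dpath (T : finType) (e : rel T) (p : seq T) : bool :=
  if p is x :: s then path e x s && uniq p else false.

(* A linkage from A to B in G - X (|A| = |B|): a set of |A| pairwise
   vertex-disjoint directed paths, each starting in A and ending in B,
   and using no vertex of X. (uniq (flatten P) = the paths are pairwise
   vertex-disjoint and each is duplicate free.) *)
Definition linkage_avoiding (T : finType) (e : rel T) (X A B : {set T}) : Prop :=
  exists P : seq (seq T),
    [/\ size P = #|A|,
        uniq (flatten P),
        forall p, p \in P -> dpath e p &
        forall p, p \in P -> exists x s, [/\ p = x :: s, x \in A,
                                             last x s \in B &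
                                             forall v, v \in p -> v \notin X]].

Definition well_linked (T : finType) (e : rel T) (W : {set T}) : Prop :=
  forall A B : {set T}, A \subset W -> B \subset W -> #|A| = #|B| ->
    linkage_avoiding e (W :\: (A :|: B)) A B.

Definition dcycle (T : finType) (e : rel T) (c : seq T) : bool :=
  [&& c != [::], uniq c & cycle e c].

(* A family of k (distinct) directed cycles such that every vertex lies
   in at most two of them. Cycles are distinct up to rotation of their
   vertex sequence. *)
Definition half_integral_packing (T : finType) (e : rel T) (k : nat)
    (C : 'I_k -> seq T) : Prop :=
  [/\ forall i, dcycle e (C i),
      forall i j, i != j -> forall n, rot n (C i) != C j &
      forall v : T, #|[set i | v \in C i]| <= 2].

From mathcomp Require Import all_boot zify.
Set Implicit Arguments. Unset Strict Implicit. Unset Printing Implicit Defensive.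

(* Split D into halves D1, D2 of size ab(2k-2)+1 and take linkages L from D1
   to D2 and M from D2 to D1. Following the L-path out of u in D1 and then the
   M-path out of its end defines a permutation of D1, whose orbits trace closed
   walks; these decompose into directed cycles that cover D1. Every vertex lies
   on at most one L-path and one M-path, and a vertex of D1 is used only once,
   so the cycles are distinct and every vertex is on at most two of them: they
   form a half-integral packing. Hence there are fewer than k of them and one
   cycle carries more than 2ab vertices of D1. Cutting it into a consecutive
   paths with 2b of these vertices each, the first b give A_i and the last b
   give B_i; finally, subsets of well-linked sets are well-linked. *)

Lemma disjointP (T : finType) (A B : {pred T}) :
  reflect (forall v, v \in A -> v \in B -> False) [disjoint A & B].
Proof.
rewrite disjoint_subset; apply: (iffP subsetP) => [AB v /AB | AB v vA]; rewrite inE.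
  by move/negP.
by apply/negP; apply: AB.
Qed.

Lemma flatten_uniq_mem_eq (T : eqType) (P : seq (seq T)) p q v :
  uniq (flatten P) -> p \in P -> q \in P -> v \in p -> v \in q -> p = q.
Proof.
elim: P => [|r P IH] //=; rewrite cat_uniq => /and3P[_ rP uP].
have notinP w : w \in r -> w \in flatten P -> False.
  by move=> wr wP; move/hasPn: rP => /(_ w wP); rewrite /= wr.
rewrite !inE => /orP[/eqP->|pP] /orP[/eqP->|qP] vp vq //.
- by case: (notinP v vp); apply/flattenP; exists q.
- by case: (notinP v vq); apply/flattenP; exists p.
- exact: IH.
Qed.

Lemma flatten_uniq_uniq (T : eqType) (P : seq (seq T)) :
  uniq (flatten P) -> [::] \notin P -> uniq P.
Proof.
elim: P => [|q P IH] //=; rewrite cat_uniq inE negb_or => /and3P[_ qP uP] /andP[qn nP].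
rewrite IH // andbT; apply/negP => qinP.
case: q qn qP qinP => [|x q] // _ /hasPn /(_ x) xP qinP.
have x_flat : x \in flatten P by apply/flattenP; exists (x :: q); rewrite ?mem_head.
by move: (xP x_flat); rewrite mem_head.
Qed.

Lemma count_flatten_subset (T : eqType) (s P : seq (seq T)) v :
  uniq s -> {subset s <= P} -> uniq P ->
  count_mem v (flatten s) <= count_mem v (flatten P).
Proof.
move=> us sP uP.
have s_filter : perm_eq s (filter (mem s) P).
  by apply: uniq_perm; rewrite ?filter_uniq // => p; rewrite mem_filter andb_idr //; apply: sP.
have P_split : perm_eq (filter (mem s) P ++ filter (predC (mem s)) P) P by rewrite perm_filterC.
rewrite (permP (perm_flatten s_filter)) -(permP (perm_flatten P_split)).
by rewrite flatten_cat count_cat leq_addr.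
Qed.

Lemma count_flatten_behead (I T : eqType) (f : I -> seq T) s v :
  count_mem v (flatten [seq behead (f i) | i <- s]) <= count_mem v (flatten (map f s)).
Proof.
elim: s => //= i s IH; rewrite !count_cat leq_add //.
by case: (f i) => //= x p; rewrite leq_addl.
Qed.

Lemma count_flatten_map_cat (I T : Type) (a : pred T) (f g : I -> seq T) s :
  count a (flatten [seq f i ++ g i | i <- s]) =
  count a (flatten (map f s)) + count a (flatten (map g s)).
Proof. by elim: s => //= i s IH; rewrite !count_cat IH addnACA. Qed.

Lemma nuniq_split (T : eqType) (s : seq T) : ~~ uniq s ->
  exists v s1 s2 s3, s = s1 ++ v :: s2 ++ v :: s3.
Proof.
elim: s => [|x s IH] //=; rewrite negb_and negbK => /orP[xs|/IH[v [s1 [s2 [s3 ->]]]]].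
  by case/splitPr: xs => s2 s3; exists x, [::], s2, s3.
by exists v, (x :: s1), s2, s3.
Qed.

Lemma cycle_split_repeat (T : eqType) (e : rel T) w : cycle e w -> ~~ uniq w ->
  exists w1 w2, [/\ cycle e w1, cycle e w2, perm_eq w (w1 ++ w2),
                    size w1 < size w & size w2 < size w].
Proof.
move=> cw /nuniq_split[v [s1 [s2 [s3 ew]]]]; exists (v :: s2), (v :: s3 ++ s1).
have rw : rot (size s1) w = (v :: s2) ++ (v :: s3 ++ s1).
  by rewrite ew rot_size_cat /= -catA.
have perm_w : perm_eq w ((v :: s2) ++ (v :: s3 ++ s1)) by rewrite -rw perm_sym perm_rot.
have : cycle e (rot (size s1) w) by rewrite rot_cycle.
rewrite rw /= rcons_cat cat_path /= => /and3P[p1 e1 p2].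
rewrite /= rcons_path p1 e1 p2; split => //; rewrite ew !size_cat /= !size_cat /=; lia.
Qed.

Lemma closed_path_cycle (T : eqType) (e : rel T) z w :
  path e z w -> last z w = z -> cycle e w.
Proof. by case: w => // y w /= /andP[ezy p] l; rewrite rcons_path p l ezy. Qed.

Lemma closed_walk_dcycles (T : finType) (e : rel T) (D : {set T}) w : cycle e w ->
  exists cs : seq (seq T),
    [/\ forall c, c \in cs -> dcycle e c && has (mem D) c,
        forall v, count_mem v (flatten cs) <= count_mem v w &
        forall x, x \in D -> x \in w -> x \in flatten cs].
Proof.
have [n] := ubnP (size w); elim: n w => // n IH w /ltnSE size_w cw.
have [uw | /(cycle_split_repeat cw)[w1 [w2 [cw1 cw2 ew lt1 lt2]]]] := boolP (uniq w).
  have [hw | hw] := boolP (has (mem D) w).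
    exists [:: w]; split=> [c | v | x _]; rewrite /= ?cats0 // inE => /eqP->.
    by rewrite /dcycle uw cw hw andbT; case: (w) hw.
  by exists [::]; split=> // x xD xw; case/negP: hw; apply/hasP; exists x.
have [cs1 [dc1 cnt1 cov1]] := IH w1 (leq_trans lt1 size_w) cw1.
have [cs2 [dc2 cnt2 cov2]] := IH w2 (leq_trans lt2 size_w) cw2.
exists (cs1 ++ cs2); split.
- by move=> c; rewrite mem_cat => /orP[/dc1|/dc2].
- by move=> v; rewrite flatten_cat count_cat (permP ew) count_cat leq_add.
- move=> x xD; rewrite (perm_mem ew) flatten_cat !mem_cat.
  by case/orP=> [/(cov1 x xD)|/(cov2 x xD)] ->; rewrite ?orbT.
Qed.

Lemma dpath_uniq (T : finType) (e : rel T) s : dpath e s -> uniq s.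
Proof. by case: s => // x s /andP[]. Qed.

Lemma dcycle_dpath (T : finType) (e : rel T) c : dcycle e c -> dpath e c.
Proof. by case: c => // x c /and3P[_ uc]; rewrite /cycle rcons_path => /andP[p _]; apply/andP. Qed.

Lemma dpath_take (T : finType) (e : rel T) s n : dpath e s -> 0 < n -> dpath e (take n s).
Proof.
case: s n => [|x s] [|n] // /andP[p u] _.
by rewrite /dpath /= take_path //; exact: (take_uniq n.+1 u).
Qed.

Lemma dpath_drop (T : finType) (e : rel T) s m : dpath e s -> m < size s -> dpath e (drop m s).
Proof.
elim: m s => [|m IH] [|x s] //=.
case: s => [|y s] // /andP[/andP[_ p] /andP[_ u]] lt.
by apply: IH => //; apply/andP.
Qed.

Definition slice (T : Type) (s : seq T) m n := drop m (take n s).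

Lemma size_slice (T : Type) (s : seq T) m n : n <= size s -> size (slice s m n) = n - m.
Proof. by move=> ns; rewrite /slice size_drop size_takel. Qed.

Lemma nth_slice (T : Type) x0 (s : seq T) m n t :
  m + t < n -> nth x0 (slice s m n) t = nth x0 s (m + t).
Proof. by move=> lt; rewrite /slice nth_drop nth_take. Qed.

Lemma mem_slice_index (T : eqType) (s : seq T) m n v : uniq s -> n <= size s ->
  v \in slice s m n -> m <= index v s < n.
Proof.
move=> us ns /(nthP v)[t]; rewrite size_slice // => lt <-.
rewrite nth_slice; last lia.
rewrite index_uniq //; lia.
Qed.

Lemma nth_in_slice (T : eqType) x0 (s : seq T) m n i : uniq s -> m <= i < n -> n <= size s ->
  nth x0 s i \in slice s m n /\ index (nth x0 s i) (slice s m n) = i - m.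
Proof.
move=> us /andP[mi i_n] ns.
have <- : nth x0 (slice s m n) (i - m) = nth x0 s i by rewrite nth_slice subnKC.
have lt : i - m < size (slice s m n) by rewrite size_slice //; lia.
by rewrite mem_nth // index_uniq // drop_uniq // take_uniq.
Qed.

Lemma dpath_slice (T : finType) (e : rel T) s m n :
  dpath e s -> m < n <= size s -> dpath e (slice s m n).
Proof.
move=> ds /andP[mn ns]; apply: dpath_drop; first by apply: dpath_take; lia.
by rewrite size_takel.
Qed.

Lemma orbit_sub_in (T : finType) (f : T -> T) (S : {set T}) x :
  {homo f : u / u \in S} -> x \in S -> {subset orbit f x <= S}.
Proof. by move=> fS xS y /trajectP[i _ ->]; apply: iter_in. Qed.

Lemma orbit_setD_closed (T : finType) (f : T -> T) (S : {set T}) x :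
  {homo f : u / u \in S} -> {in S &, injective f} -> x \in S ->
  {homo f : u / u \in S :\: [set y in orbit f x]}.
Proof.
move=> fS injS xS u; rewrite !inE => /andP[uO uS]; rewrite fS // andbT.
apply: contra uO => fuO.
have /eqP fprev := prev_cycle (cycle_orbit_in fS injS xS) fuO.
have prevS : prev (orbit f x) (f u) \in S by apply: (orbit_sub_in fS xS); rewrite mem_prev.
by rewrite -(injS _ _ prevS uS fprev) mem_prev.
Qed.

Lemma perm_enum_setD (T : finType) (S : {set T}) (O : seq T) :
  uniq O -> {subset O <= S} -> perm_eq (enum S) (O ++ enum (S :\: [set y in O])).
Proof.
move=> uO OS; apply: uniq_perm => [||y]; first exact: enum_uniq.
  rewrite cat_uniq uO enum_uniq andbT /=; apply/hasPn => y.
  by rewrite mem_enum !inE => /andP[].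
rewrite mem_enum mem_cat mem_enum !inE.
by case yO: (y \in O) => //=; rewrite OS.
Qed.

Lemma exists_subset_card (T : finType) (A : {set T}) n :
  n <= #|A| -> exists2 B : {set T}, B \subset A & #|B| = n.
Proof.
case/card_geqP=> s [us <- sA]; exists [set x in s].
  by apply/subsetP => x; rewrite inE => /sA.
by rewrite cardsE; apply/card_uniqP.
Qed.

Lemma well_linked_subset (T : finType) (e : rel T) (W W' : {set T}) :
  W' \subset W -> well_linked e W -> well_linked e W'.
Proof.
move=> sW wl A B sA sB AB.
have [P [s1 s2 s3 s4]] := wl A B (subset_trans sA sW) (subset_trans sB sW) AB.
exists P; split => // p /s4[x [s [ep xA lB av]]].
exists x, s; split => // v vp; apply: contra (av v vp); rewrite !inE => /andP[-> vW].
by rewrite (subsetP sW).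
Qed.

Definition linkage (T : finType) (e : rel T) (A B : {set T}) (P : seq (seq T)) :=
  [/\ size P = #|A|, uniq (flatten P), forall p, p \in P -> dpath e p &
      forall p, p \in P -> exists x s, [/\ p = x :: s, x \in A & last x s \in B]].

Lemma well_linked_linkage (T : finType) (e : rel T) (W A B : {set T}) :
  well_linked e W -> A \subset W -> B \subset W -> #|A| = #|B| ->
  exists P, linkage e A B P.
Proof.
move=> wlW sA sB AB; have [P [sz uP dP hP]] := wlW A B sA sB AB.
by exists P; split => // p /hP[x [s [-> xA lB _]]]; exists x, s.
Qed.

Section Linkage.

Variables (T : finType) (e : rel T) (A B : {set T}) (P : seq (seq T)).
Hypothesis linkP : linkage e A B P.

Definition link_path u := nth [::] P (find (fun p => ohead p == Some u) P).
Definition link_end u := last u (link_path u).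

Lemma nil_notin_linkage : [::] \notin P.
Proof. by case: linkP => _ _ dP _; apply/negP => /dP. Qed.

Lemma linkage_head a : a \in A -> exists2 p, p \in P & ohead p = Some a.
Proof.
case: linkP => sizeP uP _ hP aA; pose hd p := head a p.
have hd_in p : p \in P -> hd p \in p /\ hd p \in A.
  by case/hP=> x [s [-> xA _]]; rewrite /hd mem_head.
have hd_inj : {in P &, injective hd}.
  move=> p q pP qP hpq; apply: (flatten_uniq_mem_eq uP pP qP (v := hd p)).
    by case: (hd_in p pP).
  by rewrite hpq; case: (hd_in q qP).
have uhd : uniq (map hd P).
  by rewrite map_inj_in_uniq // flatten_uniq_uniq // nil_notin_linkage.
have hdA : {subset map hd P <= enum A}.
  by move=> _ /mapP[p pP ->]; rewrite mem_enum; case: (hd_in p pP).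
have size_le : size (enum A) <= size (map hd P) by rewrite size_map sizeP cardE.
have [_ /(_ a)] := uniq_min_size uhd hdA size_le.
rewrite mem_enum aA => /mapP[p pP apd]; exists p => //.
by have [x [s [ep _ _]]] := hP p pP; rewrite apd ep.
Qed.

Lemma link_path_has a : a \in A -> has (fun p => ohead p == Some a) P.
Proof. by case/linkage_head=> p pP hp; apply/hasP; exists p; rewrite ?hp. Qed.

Lemma link_path_mem a : a \in A -> link_path a \in P.
Proof. by move/link_path_has; rewrite has_find => /(mem_nth [::]). Qed.

Lemma link_pathE a : a \in A -> link_path a = a :: behead (link_path a).
Proof.
move/link_path_has/(nth_find [::]); rewrite -/(link_path a).
by case: (link_path a) => //= x s /eqP[->].
Qed.

Lemma link_path_path a : a \in A -> path e a (behead (link_path a)).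
Proof.
move=> aA; case: linkP => _ _ dP _; move: (dP _ (link_path_mem aA)).
by rewrite {1}(link_pathE aA) /dpath => /andP[].
Qed.

Lemma link_end_in a : a \in A -> link_end a \in B.
Proof.
move=> aA; case: linkP => _ _ _ /(_ _ (link_path_mem aA))[x [s [ep _]]].
by rewrite /link_end ep.
Qed.

Lemma link_path_inj : {in A &, injective link_path}.
Proof.
move=> a a' aA a'A eq_aa'; move: (link_pathE aA).
by rewrite eq_aa' {1}(link_pathE a'A) => -[->].
Qed.

Lemma link_end_inj : {in A &, injective link_end}.
Proof.
move=> a a' aA a'A ends; apply: link_path_inj => //; case: linkP => _ uP _ _.
apply: (flatten_uniq_mem_eq uP (link_path_mem aA) (link_path_mem a'A) (v := link_end a)).
  by rewrite /link_end (link_pathE aA) /= mem_last.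
by rewrite ends /link_end (link_pathE a'A) /= mem_last.
Qed.

Lemma notin_behead_link_path u v : u \in A -> v \in A -> v \notin behead (link_path u).
Proof.
move=> uA vA; apply/negP => vu.
have uv : link_path u = link_path v.
  case: linkP => _ uP _ _.
  apply: (flatten_uniq_mem_eq uP (link_path_mem uA) (link_path_mem vA) (v := v)).
    by rewrite (link_pathE uA) inE vu orbT.
  by rewrite (link_pathE vA) mem_head.
move: vu; rewrite uv; case: linkP => _ _ dP _; move: (dP _ (link_path_mem vA)).
by rewrite (link_pathE vA) /dpath /= => /andP[_ /andP[/negP]].
Qed.

Lemma count_link_paths s v : uniq s -> {subset s <= A} ->
  count_mem v (flatten (map link_path s)) <= 1.
Proof.
move=> us sA; case: linkP => _ uP _ _.
apply: leq_trans (count_flatten_subset v _ _ (flatten_uniq_uniq uP nil_notin_linkage)) _.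
- by rewrite map_inj_in_uniq // => x y /sA xA /sA yA; apply: link_path_inj.
- by move=> _ /mapP[u /sA uA ->]; apply: link_path_mem.
- by rewrite count_uniq_mem ?leq_b1.
Qed.

End Linkage.

Section LinkReturn.

Variables (T : finType) (e : rel T) (D1 D2 : {set T}) (L M : seq (seq T)).
Hypotheses (linkL : linkage e D1 D2 L) (linkM : linkage e D2 D1 M).
Hypothesis D12 : [disjoint D1 & D2].

Definition link_return u := link_end M (link_end L u).
(* The walk from u to link_return u, without u itself, so that the tours along
   an orbit concatenate into a closed walk. *)
Definition link_tour u := behead (link_path L u) ++ behead (link_path M (link_end L u)).

Lemma link_return_in : {homo link_return : u / u \in D1}.
Proof. by move=> u uD; apply: (link_end_in linkM); apply: (link_end_in linkL). Qed.

Lemma link_return_inj : {in D1 &, injective link_return}.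
Proof.
move=> u u' uD u'D eq_ret; apply: (link_end_inj linkL) => //.
by apply: (link_end_inj linkM _ _ eq_ret); apply: (link_end_in linkL).
Qed.

Lemma link_tour_path u : u \in D1 ->
  path e u (link_tour u) /\ last u (link_tour u) = link_return u.
Proof.
move=> uD; have yD := link_end_in linkL uD; set y := link_end L u in yD *.
have last_L : last u (behead (link_path L u)) = y.
  by rewrite /y /link_end {2}(link_pathE linkL uD).
rewrite /link_tour cat_path last_cat last_L (link_path_path linkL uD) (link_path_path linkM yD).
by rewrite /link_return -/y /link_end {2}(link_pathE linkM yD).
Qed.

Lemma link_tour_neq_nil u : u \in D1 -> link_tour u != [::].
Proof.
move=> uD; have := link_end_in linkL uD.
rewrite /link_tour /link_end (link_pathE linkL uD) /=.
case: (behead (link_path L u)) => //= uD2.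
by move: D12 => /disjointFr /(_ uD); rewrite uD2.
Qed.

Lemma link_return_in_tour u : u \in D1 -> link_return u \in link_tour u.
Proof.
move=> uD; have [_ <-] := link_tour_path uD.
by case: (link_tour u) (link_tour_neq_nil uD) => //= y s _; rewrite mem_last.
Qed.

Lemma link_tours_path z zs : {subset z :: zs <= D1} -> fpath link_return z zs ->
  path e z (flatten (map link_tour (z :: zs))) /\
  last z (flatten (map link_tour (z :: zs))) = link_return (last z zs).
Proof.
elim: zs z => [|z' zs IH] z zsD1 /=.
  by rewrite cats0 => _; apply: link_tour_path; apply: zsD1; rewrite mem_head.
case/andP=> /eqP ret_z fp.
have [p1 l1] := link_tour_path (zsD1 z (mem_head _ _)).
have [p2 l2] : path e z' (flatten (map link_tour (z' :: zs))) /\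
               last z' (flatten (map link_tour (z' :: zs))) = link_return (last z' zs).
  by apply: IH fp => y yzs; apply: zsD1; rewrite inE yzs orbT.
by move: p2 l2 => /= p2 l2; rewrite cat_path p1 last_cat l1 ret_z p2 l2.
Qed.

Lemma link_tours_cycle O : {subset O <= D1} -> fcycle link_return O ->
  cycle e (flatten (map link_tour O)).
Proof.
case: O => // z zs OD1; rewrite /= rcons_path => /andP[fp /eqP ret_last].
have [p l] := link_tours_path OD1 fp.
by apply: closed_path_cycle p _; rewrite l.
Qed.

Lemma mem_link_tours O : {subset O <= D1} -> fcycle link_return O ->
  {subset O <= flatten (map link_tour O)}.
Proof.
move=> OD1 cO y yO; have /eqP <- := prev_cycle cO yO.
apply/flattenP; exists (link_tour (prev O y)); first by rewrite map_f ?mem_prev.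
by apply/link_return_in_tour/OD1; rewrite mem_prev.
Qed.

(* v lies on at most one path of each linkage, and a vertex of D1 only on its
   own L-path, as its source, which the tour omits. *)
Lemma count_link_tours v :
  count_mem v (flatten (map link_tour (enum D1))) <= (v \notin D1).+1.
Proof.
rewrite /link_tour count_flatten_map_cat -addn1 leq_add //.
  have [vD | _] := boolP (v \in D1); last first.
    apply: leq_trans (count_flatten_behead _ _ _) (count_link_paths linkL _ (enum_uniq _) _).
    by move=> u; rewrite mem_enum.
  rewrite leqn0; apply/eqP/count_memPn/negP => /flattenP[p /mapP[u]].
  by rewrite mem_enum => uD -> vu; move: (notin_behead_link_path linkL uD vD); rewrite vu.
have -> : [seq behead (link_path M (link_end L u)) | u <- enum D1] =
          [seq behead (link_path M y) | y <- map (link_end L) (enum D1)] by rewrite -map_comp.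
apply: leq_trans (count_flatten_behead _ _ _) (count_link_paths linkM _ _ _).
  by rewrite map_inj_in_uniq ?enum_uniq // => x y; rewrite !mem_enum; apply: (link_end_inj linkL).
by move=> y /mapP[u]; rewrite mem_enum => /(link_end_in linkL) uD2 ->.
Qed.

Lemma link_tour_cycles_on (S : {set T}) : S \subset D1 -> {homo link_return : u / u \in S} ->
  exists cs : seq (seq T),
    [/\ forall c, c \in cs -> dcycle e c && has (mem D1) c,
        forall v, count_mem v (flatten cs) <= count_mem v (flatten (map link_tour (enum S))) &
        {subset S <= flatten cs}].
Proof.
have [n] := ubnP #|S|; elim: n S => // n IH S /ltnSE cardS sD1 retS.
have [-> | [x xS]] := set_0Vmem S; first by exists [::]; split => // y; rewrite inE.
have injS : {in S &, injective link_return}.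
  by move=> u u' /(subsetP sD1) uD /(subsetP sD1) u'D; apply: link_return_inj.
set O := orbit link_return x.
have OS : {subset O <= S} := orbit_sub_in retS xS.
have OD1 : {subset O <= D1} by move=> y /OS/(subsetP sD1).
have cO : fcycle link_return O := cycle_orbit_in retS injS xS.
have [cs1 [dc1 cnt1 cov1]] := closed_walk_dcycles D1 (link_tours_cycle OD1 cO).
set S' := S :\: [set y in O].
have cardS' : #|S'| < n.
  have : S' \subset S :\ x by apply: setDS; rewrite sub1set inE in_orbit.
  by move/subset_leq_card; move: cardS; rewrite (cardsD1 x S) xS; lia.
have [cs2 [dc2 cnt2 cov2]] :=
  IH S' cardS' (subset_trans (subsetDl _ _) sD1) (orbit_setD_closed retS injS xS).
have permS : perm_eq (enum S) (O ++ enum S') := perm_enum_setD (orbit_uniq _ _) OS.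
exists (cs1 ++ cs2); split.
- by move=> c; rewrite mem_cat => /orP[/dc1|/dc2].
- move=> v; rewrite (permP (perm_flatten (perm_map link_tour permS))) map_cat.
  by rewrite !flatten_cat !count_cat leq_add.
- move=> y yS; rewrite flatten_cat mem_cat; have [yO | yO] := boolP (y \in O).
    by rewrite cov1 ?OD1 ?mem_link_tours.
  by rewrite cov2 ?orbT // !inE yO yS.
Qed.

Lemma link_tour_dcycles : exists cs : seq (seq T),
  [/\ forall c, c \in cs -> dcycle e c && has (mem D1) c,
      forall v, count_mem v (flatten cs) <= 2,
      forall x, x \in D1 -> count_mem x (flatten cs) <= 1 &
      {subset D1 <= flatten cs}].
Proof.
have [cs [dc cnt cov]] := link_tour_cycles_on (subxx D1) link_return_in.
exists cs; split => // [v | x xD]; apply: leq_trans (cnt _) _.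
  by apply: leq_trans (count_link_tours v) _; case: (v \in D1).
by apply: leq_trans (count_link_tours x) _; rewrite xD.
Qed.

End LinkReturn.

Lemma card_mem_nth_le_count (T : eqType) (cs : seq (seq T)) k v : k <= size cs ->
  #|[set i : 'I_k | v \in nth [::] cs i]| <= count_mem v (flatten cs).
Proof.
move=> ks.
have -> : #|[set i : 'I_k | v \in nth [::] cs i]| = \sum_(i < k) (v \in nth [::] cs i).
  by rewrite -sum1_card big_mkcond /=; apply: eq_bigr => i _; rewrite inE; case: ifP.
rewrite count_flatten sumnE big_map (big_nth [::]) big_mkord.
rewrite (big_ord_widen _ (fun i => nat_of_bool (v \in nth [::] cs i)) ks) big_mkcond /=.
apply: leq_sum => i _; case: ifP => // _.
by case: (boolP (v \in _)) => //= vc; rewrite -has_count has_pred1.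
Qed.

Lemma dcycles_half_integral_packing (T : finType) (e : rel T) (D : {set T})
    (cs : seq (seq T)) k :
  (forall c, c \in cs -> dcycle e c && has (mem D) c) ->
  (forall v, count_mem v (flatten cs) <= 2) ->
  (forall x, x \in D -> count_mem x (flatten cs) <= 1) ->
  k <= size cs -> exists C : 'I_k -> seq T, half_integral_packing e C.
Proof.
move=> csP cnt2 cnt1 ks; exists (fun i => nth [::] cs i).
have nthP (i : 'I_k) : dcycle e (nth [::] cs i) && has (mem D) (nth [::] cs i).
  exact/csP/mem_nth/(leq_trans (ltn_ord i) ks).
split=> [i | i j ij n | v]; first by case/andP: (nthP i).
- apply/negP => /eqP eq_ij; case/andP: (nthP i) => _ /hasP[x xi xD].
  have : [set i; j] \subset [set l : 'I_k | x \in nth [::] cs l].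
    by apply/subsetP => l; rewrite !inE => /orP[] /eqP->; rewrite -?eq_ij ?mem_rot.
  move/subset_leq_card; rewrite cards2 ij /= => two_le.
  by have := leq_trans two_le (card_mem_nth_le_count x ks); rewrite ltnNge cnt1.
- exact: leq_trans (card_mem_nth_le_count v ks) (cnt2 v).
Qed.

Lemma count_flatten_pigeonhole (T : finType) (D : {set T}) (cs : seq (seq T)) m :
  {subset D <= flatten cs} -> m * size cs < #|D| ->
  exists2 c, c \in cs & m < count (mem D) c.
Proof.
move=> Dcs lt; case: (boolP (has (fun c => m < count (mem D) c) cs)) => [/hasP//|/hasPn small].
have count_le : count (mem D) (flatten cs) <= m * size cs.
  rewrite count_flatten; elim: cs small {Dcs lt} => //= c cs IH small.
  rewrite mulnS; apply: leq_add; first by rewrite leqNgt; apply: small; rewrite mem_head.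
  by apply: IH => c' c'cs; apply: small; rewrite inE c'cs orbT.
have : #|D| <= count (mem D) (flatten cs).
  rewrite cardE -size_filter; apply: uniq_leq_size; first exact: enum_uniq.
  by move=> x; rewrite mem_enum mem_filter => xD; apply/andP; split; [exact: xD | exact: Dcs].
lia.
Qed.

Section CutDpath.

Variables (T : finType) (e : rel T) (D : {set T}) (x0 : T) (s : seq T) (a b : nat).
Let c := x0 :: s.
Hypotheses (c_dpath : dpath e c) (b_gt0 : 0 < b) (c_rich : 2 * a * b < count (mem D) c).

(* pt j is the j-th vertex of D along c, at position pos j; run w is the w-th
   group of b consecutive such vertices, and block i the subpath of c from the
   first vertex of run (2i) up to, excluding, the first vertex of run (2i+2),
   which exists by the strict inequality c_rich. *)
Let ps := [seq i <- iota 0 (size c) | nth x0 c i \in D].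
Let pos j := nth 0 ps j.
Let pt j := nth x0 c (pos j).
Let run w := [set pt (w * b + j) | j : 'I_b].
Let block i := slice c (pos (2 * i * b)) (pos ((2 * i).+2 * b)).

Lemma size_positions : size ps = count (mem D) c.
Proof.
have -> : count (mem D) c = count (mem D) (mkseq (nth x0 c) (size c)) by rewrite mkseq_nth.
by rewrite size_filter /mkseq count_map.
Qed.

Lemma positions_ltn j j' : j < j' -> j' < size ps -> pos j < pos j'.
Proof.
move=> jj' j's; have ps_sorted : sorted ltn ps.
  by apply: sorted_filter; [exact: ltn_trans | exact: iota_ltn_sorted].
by apply: (sorted_ltn_nth ltn_trans 0 ps_sorted); rewrite // inE (ltn_trans jj').
Qed.

Lemma positions_leq j j' : j <= j' -> j' < size ps -> pos j <= pos j'.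
Proof.
by rewrite leq_eqVlt => /predU1P[-> // | jj' j's]; apply/ltnW/positions_ltn.
Qed.

Lemma mem_positions j : j < size ps -> pos j < size c /\ pt j \in D.
Proof.
by move/(mem_nth 0); rewrite mem_filter mem_iota => /andP[ptD /andP[_ lt]].
Qed.

Lemma pt_inj j j' : pt j = pt j' -> j < size ps -> j' < size ps -> j = j'.
Proof.
move=> eq_pt js j's.
have : pos j = pos j'.
  have [posj _] := mem_positions js; have [posj' _] := mem_positions j's.
  by move/(congr1 (index^~ c)): eq_pt; rewrite /pt !index_uniq ?(dpath_uniq c_dpath).
case: (ltngtP j j') => // jj'.
  by move/eqP; rewrite ltn_eqF // positions_ltn.
by move/esym/eqP; rewrite ltn_eqF // positions_ltn.
Qed.

Lemma card_run w : w.+1 * b <= size ps -> #|run w| = b.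
Proof.
move=> wb; rewrite card_imset ?card_ord // => j j' eq_pt.
have := ltn_ord j; have := ltn_ord j' => j'b jb.
by apply/val_inj/(@addnI (w * b)); apply: (pt_inj eq_pt); lia.
Qed.

Lemma disjoint_run w w' : w != w' -> w.+1 * b <= size ps -> w'.+1 * b <= size ps ->
  [disjoint run w & run w'].
Proof.
move=> ww' wb w'b; apply/disjointP => _ /imsetP[j _ ->] /imsetP[j' _ eq_pt].
have jb := ltn_ord j; have j'b := ltn_ord j'.
have /(congr1 (divn^~ b)) : w * b + j = w' * b + j' by apply: (pt_inj eq_pt); lia.
by rewrite !divnMDl // !divn_small // !addn0 => /eqP; apply/negP.
Qed.

Lemma run_sub w : w.+1 * b <= size ps -> run w \subset D.
Proof.
move=> wb; apply/subsetP => _ /imsetP[j _ ->]; have jb := ltn_ord j.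
by case: (mem_positions (j := w * b + j)); first lia.
Qed.

Lemma block_bound (i : 'I_a) : (2 * i).+2 * b < size ps.
Proof. by rewrite size_positions; have := ltn_ord i; have := c_rich; nia. Qed.

Lemma pt_in_block (i : 'I_a) J : 2 * i * b <= J < (2 * i).+2 * b ->
  pt J \in block i /\ index (pt J) (block i) = pos J - pos (2 * i * b).
Proof.
move=> /andP[lo hi]; have ib := block_bound i.
apply: nth_in_slice; first exact: dpath_uniq c_dpath.
  by apply/andP; split; [apply: positions_leq | apply: positions_ltn]; lia.
by apply/ltnW; case: (mem_positions ib).
Qed.

Lemma block_dpath (i : 'I_a) : dpath e (block i).
Proof.
have ib := block_bound i; apply: dpath_slice c_dpath _; apply/andP; split.
  by apply: positions_ltn => //; nia.
by apply/ltnW; case: (mem_positions ib).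
Qed.

Lemma block_disjoint (i j : 'I_a) : i < j -> [disjoint block i & block j].
Proof.
move=> ij; have ib := block_bound i; have jb := block_bound j.
have c_uniq := dpath_uniq c_dpath.
have [posi _] := mem_positions ib; have [posj _] := mem_positions jb.
apply/disjointP => v /(mem_slice_index c_uniq (ltnW posi)) vi.
move=> /(mem_slice_index c_uniq (ltnW posj)) vj.
have : pos ((2 * i).+2 * b) <= pos (2 * j * b) by apply: positions_leq; nia.
lia.
Qed.

Lemma run_sub_block (i : 'I_a) w : 2 * i <= w <= (2 * i).+1 -> {subset run w <= block i}.
Proof.
move=> wi _ /imsetP[j _ ->]; have jb := ltn_ord j.
have J_in : 2 * i * b <= w * b + j < (2 * i).+2 * b.
  by apply/andP; split; nia.
by case: (pt_in_block J_in).
Qed.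

Lemma run_index_lt (i : 'I_a) x y : x \in run (2 * i) -> y \in run (2 * i).+1 ->
  index x (block i) < index y (block i).
Proof.
move=> /imsetP[j _ ->] /imsetP[j' _ ->]; have jb := ltn_ord j; have j'b := ltn_ord j'.
have ib := block_bound i.
have J1 : 2 * i * b <= 2 * i * b + j < (2 * i).+2 * b by apply/andP; split; lia.
have J2 : 2 * i * b <= (2 * i).+1 * b + j' < (2 * i).+2 * b by apply/andP; split; lia.
rewrite (pt_in_block J1).2 (pt_in_block J2).2.
have : pos (2 * i * b) <= pos (2 * i * b + j) by apply: positions_leq; lia.
have : pos (2 * i * b + j) < pos ((2 * i).+1 * b + j') by apply: positions_ltn; lia.
lia.
Qed.

Lemma cut_dpath : exists (P : 'I_a -> seq T) (A B : 'I_a -> {set T}),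
  [/\ forall i, [/\ dpath e (P i), {subset A i <= P i} & {subset B i <= P i}],
      forall i j, i != j -> [disjoint P i & P j],
      (forall i, #|A i| = b /\ #|B i| = b) /\
      (forall i j, [disjoint A i & B j] /\
         (i != j -> [disjoint A i & A j] /\ [disjoint B i & B j])),
      forall i x y, x \in A i -> y \in B i -> index x (P i) < index y (P i) &
      forall i, A i :|: B i \subset D].
Proof.
exists (fun i => block i), (fun i => run (2 * i)), (fun i => run (2 * i).+1).
have runb (i : 'I_a) : (2 * i).+1 * b <= size ps /\ (2 * i).+2 * b <= size ps.
  by have := block_bound i; split; nia.
split.
- by move=> i; split; [exact: block_dpath | apply: run_sub_block; lia ..].
- move=> i j; case: (ltngtP i j) => [ij | ji | /val_inj->]; rewrite ?eqxx // => _.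
    exact: block_disjoint.
  by rewrite disjoint_sym; apply: block_disjoint.
- split=> [i | i j]; first by have [bi1 bi2] := runb i; rewrite !card_run.
  have [bi1 bi2] := runb i; have [bj1 bj2] := runb j.
  split=> [|ij]; first by apply: disjoint_run => //; lia.
  have ij' : (i : nat) != j := ij.
  by split; apply: disjoint_run => //; lia.
- by move=> i x y; apply: run_index_lt.
- by move=> i; have [bi1 bi2] := runb i; rewrite subUset !run_sub.
Qed.

End CutDpath.

Unset Implicit Arguments.

Theorem lemma19 (T : finType) (e : rel T) (a b k : nat) (D : {set T}) :
  1 <= a -> 1 <= b -> 1 <= k ->
  well_linked e D ->
  #|D| = 2 * (a * b * (2 * k - 2) + 1) ->
  ~ (exists C : 'I_k -> seq T, half_integral_packing e C) ->
  exists (P : 'I_a -> seq T) (A B : 'I_a -> {set T}),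
    [/\ forall i, [/\ dpath e (P i), {subset A i <= P i} & {subset B i <= P i}],
        (* (1) *) forall i j, i != j -> [disjoint P i & P j],
        (* (2) *) (forall i, #|A i| = b /\ #|B i| = b) /\
                  (forall i j, [disjoint A i & B j] /\
                     (i != j -> [disjoint A i & A j] /\ [disjoint B i & B j])),
        (* (3) *) forall i x y, x \in A i -> y \in B i ->
                    index x (P i) < index y (P i) &
        (* (4) *) well_linked e (\bigcup_(i < a) (A i :|: B i))].
Proof.
move=> _ b_gt0 _ wlD cardD no_packing.
have [D1 sD1 cardD1] : exists2 D1 : {set T}, D1 \subset D & #|D1| = a * b * (2 * k - 2) + 1.
  by apply: exists_subset_card; rewrite cardD; lia.
set D2 := D :\: D1.
have cardD2 : #|D2| = #|D1| by rewrite cardsD (setIidPr sD1) cardD cardD1; lia.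
have D12 : [disjoint D1 & D2] by apply/disjointP => v vD1; rewrite inE vD1.
have [L linkL] := well_linked_linkage wlD sD1 (subsetDl D D1) (esym cardD2).
have [M linkM] := well_linked_linkage wlD (subsetDl D D1) sD1 cardD2.
have [cs [cs_cycles cs_count2 cs_count1 cs_cover]] := link_tour_dcycles linkL linkM D12.
have cs_few : size cs < k.
  rewrite ltnNge; apply/negP => /(dcycles_half_integral_packing cs_cycles cs_count2 cs_count1).
  exact: no_packing.
have [c /cs_cycles/andP[/dcycle_dpath c_dpath _] c_rich] :
    exists2 c, c \in cs & 2 * a * b < count (mem D1) c.
  apply: count_flatten_pigeonhole cs_cover _; rewrite cardD1.
  have cs_le : 2 * size cs <= 2 * k - 2 by lia.
  by have := leq_mul (leqnn (a * b)) cs_le; lia.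
case: c c_dpath c_rich => [// | x0 s] c_dpath c_rich.
have [P [A [B [? ? ? ? AB_D1]]]] := cut_dpath c_dpath b_gt0 c_rich.
exists P, A, B; split => //.
apply: well_linked_subset wlD; apply/bigcupsP => i _; exact: subset_trans (AB_D1 i) sD1.
Qed.
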